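(* Let $q\in(0,1)$, $\alpha\in(-1,1)$ and $\beta<1$ real, $z\in\mathbb{C}\setminus\{0\}$ and $n\ge-1$. Then \begin{align*} p_n^{(\alpha,\beta)}(z+z^{-1};q)=\frac{1}{z^{-1}-z}\frac{(\alpha;q)_n}{(\beta;q)_n}\Big[&z^{-n-1}\,{}_2\phi_1\!\left(z\tau,z\tau^{-1};qz^2;q,\alpha\right){}_2\phi_1\!\left(z^{-1}\tau,z^{-1}\tau^{-1};qz^{-2};q,\alpha q^{n+1}\right)\\ &-z^{n+1}\,{}_2\phi_1\!\left(z^{-1}\tau,z^{-1}\tau^{-1};qz^{-2};q,\alpha\right){}_2\phi_1\!\left(z\tau,z\tau^{-1};qz^{2};q,\alpha q^{n+1}\right)\Big], \end{align*} where for $z\in\pm q^{\mathbb{Z}/2}$ the right-hand side is understood as the corresponding limit value.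
   Context: $(a;q)_n:=\prod_{j=0}^{n-1}(1-aq^j)$ for $n\in\mathbb{N}_0\cup\{\infty\}$, and for $n=-1$, $(a;q)_{-1}:=(1-aq^{-1})^{-1}$. The polynomials $p_n^{(\alpha,\beta)}(x;q)$ are defined by $p_{-1}=0$, $p_0=1$, $p_{n+1}(x)=xp_n(x)-\tilde\gamma_{n-1}\tilde\gamma_np_{n-1}(x)$ for $n\in\mathbb{N}_0$, where $\tilde\gamma_n=(1-\alpha q^n)/(1-\beta q^n)$. The $q$-Gauss series is ${}_2\phi_1(a,b;c;q,w)=\sum_{k\ge0}\frac{(a,b;q)_k}{(c,q;q)_k}w^k$. Here $\tau$ is any nonzero number with $\alpha(\tau+\tau^{-1})=\beta(z+z^{-1})$; the series depend only on this relation, since $\alpha^k(z\tau,z\tau^{-1};q)_k=\prod_{j=0}^{k-1}(\alpha(1+z^2q^{2j})-\beta q^j(1+z^2))$, and for $\alpha=0$ the terms are defined by this product expression. *)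

From HB Require Import structures.
From mathcomp Require Import all_boot all_order all_algebra.
From mathcomp Require Import all_classical all_reals all_analysis.
From mathcomp Require Export complex.
Import Order.TTheory GRing.Theory Num.Theory.
Import numFieldNormedType.Exports.

Set Implicit Arguments.
Unset Strict Implicit.
Unset Printing Implicit Defensive.

Local Open Scope ring_scope.
Local Open Scope classical_set_scope.

HB.instance Definition _ (R : realType) :=
  PseudoPointedMetric.copy (complex R) (complex R)^o.
HB.instance Definition _ (R : realType) :=
  NormedModule.copy (complex R) (complex R)^o.

Section Defs.
Variable R : realType.
Local Notation C := (R[i]).

Definition qpoch (a q : C) (k : nat) : C := \prod_(j < k) (1 - a * q ^+ j).

(* (a;q)_n for n : int; for n = -1 this is (1 - a q^{-1})^{-1}
   (for n <= -2 the standard extension \prod_{j=1}^{-n} (1 - a q^{-j})^{-1}). *)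
Definition qpochZ (a q : C) (n : int) : C :=
  match n with
  | Posz k => qpoch a q k
  | Negz k => \prod_(j < k.+1) (1 - a * q ^- j.+1)^-1
  end.

Definition gamt (al be q : C) (i : int) : C := (1 - al * q ^ i) / (1 - be * q ^ i).

(* pP k = (p_{k-1}(x), p_k(x)) computed by the three-term recurrence
   p_{-1} = 0, p_0 = 1, p_{k+1} = x p_k - gamt_{k-1} gamt_k p_{k-1}. *)
Fixpoint pP (al be q x : C) (k : nat) : C * C :=
  match k with
  | 0%N => (0, 1)
  | k'.+1 =>
      let pr := pP al be q x k' in
      (pr.2, x * pr.2 - gamt al be q (k'%:Z - 1) * gamt al be q k'%:Z * pr.1)
  end.

Definition pAB (al be q : C) (n : int) (x : C) : C :=
  match n with
  | Posz k => (pP al be q x k).2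
  | Negz _ => 0
  end.

(* alpha^k (z tau, z tau^{-1}; q)_k, written via the product expression
   prod_{j<k} (alpha (1 + z^2 q^{2j}) - beta q^j (1 + z^2)). *)
Definition numtau (al be q z : C) (k : nat) : C :=
  \prod_(j < k) (al * (1 + z ^+ 2 * q ^+ (2 * j)) - be * q ^+ j * (1 + z ^+ 2)).

(* k-th term of 2phi1(z tau, z tau^{-1}; q z^2; q, alpha * w):
   (z tau, z tau^{-1};q)_k / (q z^2, q; q)_k * (alpha w)^k. *)
Definition phiterm (al be q z w : C) (k : nat) : C :=
  numtau al be q z k / (qpoch (q * z ^+ 2) q k * qpoch q q k) * w ^+ k.

(* 2phi1(z tau, z tau^{-1}; q z^2; q, alpha * w) where
   alpha (tau + tau^{-1}) = beta (z + z^{-1}). *)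
Definition phitau (al be q z w : C) : C := lim (series (phiterm al be q z w) @ \oo).

Definition rhs25 (al be q : C) (n : int) (z : C) : C :=
  (z^-1 - z)^-1 * (qpochZ al q n / qpochZ be q n) *
  (z ^ (- (n + 1)) * phitau al be q z 1 * phitau al be q z^-1 (q ^ (n + 1))
   - z ^ (n + 1) * phitau al be q z^-1 1 * phitau al be q z (q ^ (n + 1))).

Definition qhalf_lattice (q z : C) : Prop := exists m : int, z ^+ 2 = q ^ m.

End Defs.

From HB Require Import structures.
From mathcomp Require Import all_boot all_order all_algebra.
From mathcomp Require Import all_classical all_reals all_analysis.
From mathcomp Require Import complex ring lra.
Import Order.TTheory GRing.Theory Num.Theory.
Import numFieldNormedType.Exports.
Local Open Scope ring_scope.
Local Open Scope classical_set_scope.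
Local Open Scope complex_scope.
Set Implicit Arguments.
Unset Strict Implicit.
Unset Printing Implicit Defensive.

(** The q-difference equation of the q-Gauss series in its last argument
   makes [w^m 2phi1(w tau, w/tau; q w^2; q, alpha q^m)] a solution of the
   recurrence [gamma~_m (y_{m+2} + y_m) = (w + w^-1) y_{m+1}], for [w = z] and
   [w = z^-1].  Since the series tends to 1 as [m -> oo], the Casoratian of
   these two solutions is [z^-1 - z]; the solution built from them with
   initial values 0, 1 is, up to the factor [(alpha;q)_n/(beta;q)_n], the
   orthogonal polynomial [p_n(z + z^-1)], which is the claimed identity.  On
   the lattice [z^2 \in q^Z] the identity holds at all nearby points, which
   are off the lattice, and [p_n] is continuous. *)

Notation normc := ComplexField.Normc.normc.

Section ComplexNorm.
Variable R : realType.
Local Notation C := R[i].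

(* Restated at [R[i]]: the library versions, stated over an rcfType, leave
   instances in rewritten terms that later rewrites no longer recognize. *)
Lemma normc1 : normc (1 : C) = 1. Proof. exact: ComplexField.Normc.normc1. Qed.

Lemma normcM (x y : C) : normc (x * y) = normc x * normc y.
Proof. exact: ComplexField.Normc.normcM. Qed.

Lemma normcV (x : C) : normc x^-1 = (normc x)^-1.
Proof. exact: ComplexField.Normc.normcV. Qed.

Lemma normcE (x : C) : `|x| = (normc x)%:C. Proof. by []. Qed.

Lemma normc_ge0 (x : C) : 0 <= normc x.
Proof. by case: x => a b; exact: sqrtr_ge0. Qed.

Lemma normc_eq0 (x : C) : (normc x == 0) = (x == 0).
Proof.
apply/eqP/eqP => [/ComplexField.Normc.eq0_normc // | ->].
exact: ComplexField.Normc.normc0.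
Qed.

Lemma normc_real (r : R) : normc r%:C = `|r|.
Proof. by rewrite /normc /= expr0n /= addr0 sqrtr_sqr. Qed.

Lemma normcX (x : C) n : normc (x ^+ n) = normc x ^+ n.
Proof. by apply: complexI; rewrite rmorphXn /= -!normcE normrX. Qed.

Lemma normc_sum (I : Type) (r : seq I) (F : I -> C) :
  normc (\sum_(i <- r) F i) <= \sum_(i <- r) normc (F i).
Proof. by rewrite -lecR rmorph_sum /=; exact: (@ler_norm_sum _ C _ r F xpredT). Qed.

Lemma lerB_normc (x y : C) : normc x - normc y <= normc (x - y).
Proof. by rewrite lerBlDr; apply: le_trans (le_normcD _ _); rewrite subrK. Qed.

Lemma ler_normcB (x y : C) : normc (x - y) <= normc x + normc y.
Proof. by apply: le_trans (le_normcD _ _) _; rewrite normcN. Qed.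

Lemma normc_complex_le (a b : R) : normc (a +i* b) <= `|a| + `|b|.
Proof.
have -> : a +i* b = a%:C + b%:C * 'i by simpc.
apply: le_trans (le_normcD _ _) _; rewrite normcM !normc_real.
by rewrite [normc _]/normc /= expr0n expr1n /= add0r sqrtr1 mulr1.
Qed.

Lemma normc_Re_le (x : C) : `|complex.Re x| <= normc x.
Proof.
by case: x => a b /=; rewrite -sqrtr_sqr ler_sqrt ?addr_ge0 ?sqr_ge0 // lerDl sqr_ge0.
Qed.

Lemma normc_Im_le (x : C) : `|complex.Im x| <= normc x.
Proof.
by case: x => a b /=; rewrite -sqrtr_sqr ler_sqrt ?addr_ge0 ?sqr_ge0 // lerDr sqr_ge0.
Qed.

Lemma cvg_normcP (T : Type) (F : set_system T) (FF : Filter F) (f : T -> C) (l : C) :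
  f @ F --> l <-> forall e : R, 0 < e -> \forall t \near F, normc (l - f t) < e.
Proof.
rewrite cvgrPdist_lt; split => H e e0.
  by apply: filterS (H e%:C _) => [t|]; rewrite ?normcE ltcR.
have [eI eR] : complex.Im e = 0 /\ 0 < complex.Re e.
  by move: e0; rewrite ltcE /= => /andP[/eqP -> ->].
have -> : e = (complex.Re e)%:C by case: e e0 eI eR => a b /= _ -> _.
by apply: filterS (H _ eR) => t; rewrite normcE ltcR.
Qed.

Lemma cvg_complex (T : Type) (F : set_system T) (FF : Filter F) (a b : T -> R) (la lb : R) :
  a @ F --> la -> b @ F --> lb -> (fun t => a t +i* b t) @ F --> la +i* lb.
Proof.
move=> /cvgrPdist_lt Ha /cvgrPdist_lt Hb; apply/cvg_normcP => e e0.
have e2 : 0 < e / 2 by rewrite divr_gt0.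
near=> t.
have ha : `|la - a t| < e / 2 by near: t; exact: Ha.
have hb : `|lb - b t| < e / 2 by near: t; exact: Hb.
have -> : la +i* lb - (a t +i* b t) = (la - a t) +i* (lb - b t) by simpc.
by apply: le_lt_trans (normc_complex_le _ _) _; lra.
Unshelve. all: by end_near.
Qed.

(* [R[i]] carries no complete normed structure in the library, so the series
   is split into its real and imaginary parts. *)
Lemma cvg_series_geometric_bound (u : nat -> C) (M r : R) : 0 <= r < 1 ->
  (forall k, normc (u k) <= M * r ^+ k) -> cvgn (series u).
Proof.
move=> /andP[r0 r1] Hu.
have cvg_real (a : nat -> R) : (forall k, `|a k| <= normc (u k)) -> cvgn (series a).
  have M0 : 0 <= M by rewrite -[M]mulr1 -(expr0 r) (le_trans _ (Hu 0%N)) ?normc_ge0.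
  move=> Ha; apply: normed_cvg; apply: (series_le_cvg (v_ := geometric M r)).
  - by move=> k /=.
  - by move=> k; rewrite /geometric /= mulr_ge0 ?exprn_ge0.
  - by move=> k; apply: le_trans (Ha k) (Hu k).
  - by apply: is_cvg_geometric_series; rewrite ger0_norm.
pose re k := complex.Re (u k); pose im k := complex.Im (u k).
have ReIm n : series u n = series re n +i* series im n.
  elim: n => [|n IH]; first by rewrite /series /= !big_geq.
  by rewrite !seriesSr IH /re /im; case: (u n).
apply/cvg_ex; exists (limn (series re) +i* limn (series im)).
rewrite (funext ReIm); apply: cvg_complex; apply: cvg_real => k.
  exact: normc_Re_le.
exact: normc_Im_le.
Qed.

Lemma one_subC_neq0 (r : R) : r < 1 -> 1 - r%:C != 0 :> C.
Proof.
move=> r1; have -> : 1 - r%:C = (1 - r)%:C :> C by rewrite rmorphB rmorph1.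
by rewrite eq_complex /= eqxx andbT subr_eq0 gt_eqF.
Qed.

Lemma cvg_normc_le (u : nat -> C) (l c : C) (r : R) : u @ \oo --> l ->
  (\forall n \near \oo, normc (u n - c) <= r) -> normc (l - c) <= r.
Proof.
move=> /cvg_normcP ul ev; rewrite leNgt; apply/negP => lt.
have gap : 0 < normc (l - c) - r by rewrite subr_gt0.
have [n [un ln]] := filter_ex (filterI ev (ul _ gap)).
by have := le_normcD (l - u n) (u n - c); rewrite addrA subrK; lra.
Qed.

End ComplexNorm.

Lemma eventually_geometric_bound (R : realFieldType) (a : nat -> R) (r : R) :
  0 < r -> (forall k, 0 <= a k) -> (\forall k \near \oo, a k.+1 <= r * a k) ->
  exists M, forall k, a k <= M * r ^+ k.
Proof.
move=> r0 a0 [K _ HK].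
pose M := \sum_(i < K.+1) a i / r ^+ i.
have M_ge k : (k <= K)%N -> a k <= M * r ^+ k.
  move=> kK; rewrite -ler_pdivrMr ?exprn_gt0 //.
  rewrite /M (bigD1 (Ordinal (kK : (k < K.+1)%N))) //= lerDl sumr_ge0 // => i _.
  by rewrite divr_ge0 ?a0 ?exprn_ge0 ?ltW.
exists M => k; case: (leqP k K) => [/M_ge //| /ltnW].
move=> /subnKC <-; elim: (k - K)%N => [|j IH]; first by rewrite addn0 M_ge.
rewrite addnS exprS mulrCA; apply: le_trans (HK _ (leq_addr _ _)) _.
by rewrite ler_pM2l.
Qed.

Lemma cvg_series_lincomb3 (K : numFieldType) (f g h : nat -> K) (a b c lf lg lh : K) :
  series f @ \oo --> lf -> series g @ \oo --> lg -> series h @ \oo --> lh ->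
  series (fun k => a * f k + b * g k + c * h k) @ \oo --> a * lf + b * lg + c * lh.
Proof.
move=> Hf Hg Hh.
have -> : series (fun k => a * f k + b * g k + c * h k) =
          (fun n => a * series f n + b * series g n + c * series h n).
  by apply: funext => n; rewrite /series /= !big_split /= -!mulr_sumr.
by apply: cvgD; [apply: cvgD|]; apply: cvgMl_tmp.
Qed.

Lemma cvg_series_shift (K : numFieldType) (V : normedModType K) (u : nat -> V) (l : V) :
  u 0%N = 0 -> series u @ \oo --> l -> series (fun k => u k.+1) @ \oo --> l.
Proof.
move=> u0 Hu; have -> : series (fun k => u k.+1) = (fun n => series u n.+1).
  by apply: funext => n; rewrite /series /= big_nat_recl // u0 add0r.
by rewrite (cvg_shiftS (series u)).
Qed.

Section SecondOrderRecurrence.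
Variables (K : fieldType) (c : nat -> K) (x : K).

Definition solves (y : nat -> K) := forall m, c m * (y m.+2 + y m) = x * y m.+1.

Definition casoratian (u v : nat -> K) m := u m * v m.+1 - u m.+1 * v m.

Definition normalized_solution (u v : nat -> K) m :=
  (u 0%N * v m - u m * v 0%N) / casoratian u v 0.

Lemma casoratian_const u v : (forall m, c m != 0) -> solves u -> solves v ->
  forall m, casoratian u v m = casoratian u v 0.
Proof.
move=> c_neq0 u_sol v_sol; elim=> [//|m <-]; apply: (mulfI (c_neq0 m)).
transitivity (u m.+1 * (c m * (v m.+2 + v m)) - v m.+1 * (c m * (u m.+2 + u m)) +
              c m * casoratian u v m); first by rewrite /casoratian; ring.
by rewrite u_sol v_sol; ring.
Qed.

Lemma normalized_solution_solves u v :
  solves u -> solves v -> solves (normalized_solution u v).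
Proof.
move=> u_sol v_sol m; rewrite /normalized_solution.
transitivity ((u 0%N * (c m * (v m.+2 + v m)) - (c m * (u m.+2 + u m)) * v 0%N) /
              casoratian u v 0); first by ring.
by rewrite u_sol v_sol; ring.
Qed.

Lemma normalized_solution0 u v : normalized_solution u v 0 = 0.
Proof. by rewrite /normalized_solution subrr mul0r. Qed.

Lemma normalized_solution1 u v : casoratian u v 0 != 0 -> normalized_solution u v 1 = 1.
Proof. by move=> W_neq0; rewrite /normalized_solution divff. Qed.

End SecondOrderRecurrence.

Section OrthogonalPolynomials.
Variables (R : realType) (al be q x : R[i]).

Lemma qpoch_ratioS k :
  qpoch al q k.+1 / qpoch be q k.+1 = qpoch al q k / qpoch be q k * gamt al be q k.
Proof. by rewrite /qpoch !big_ord_recr /= /gamt -exprnP !invfM; ring. Qed.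

Lemma pP_solution (y : nat -> R[i]) :
  solves (fun m => gamt al be q m) x y -> y 0%N = 0 -> y 1%N = 1 ->
  forall k, (pP al be q x k).2 = qpoch al q k / qpoch be q k * y k.+1.
Proof.
move=> y_sol y0 y1.
suff pP2 k : (pP al be q x k).2 = qpoch al q k / qpoch be q k * y k.+1 /\
             (pP al be q x k.+1).2 = qpoch al q k.+1 / qpoch be q k.+1 * y k.+2.
  by move=> k; case: (pP2 k).
elim: k => [|k [IH1 IH2]].
  rewrite qpoch_ratioS /qpoch !big_ord0 divr1 y1 /= !mulr1 mulr0 subr0 mul1r.
  by split=> //; have := y_sol 0%N; rewrite y0 y1 addr0 mulr1.
split=> //; have -> : (pP al be q x k.+2).2 = x * (pP al be q x k.+1).2 -
    gamt al be q k * gamt al be q k.+1 * (pP al be q x k).2.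
  by rewrite /= -addn1 PoszD addrK.
rewrite IH1 IH2 !qpoch_ratioS.
transitivity (qpoch al q k / qpoch be q k * gamt al be q k *
  (x * y k.+2 - gamt al be q k.+1 * y k.+1)); first by ring.
by rewrite -(y_sol k.+1); ring.
Qed.

End OrthogonalPolynomials.

Section QHypergeometric.
Variable R : realType.
Local Notation C := R[i].
Variables q al be : R.
Hypotheses (q_gt0 : 0 < q) (q_lt1 : q < 1) (al_lt1 : `|al| < 1) (be_lt1 : be < 1).
Local Notation Q := q%:C.
Local Notation A := al%:C.
Local Notation B := be%:C.
Local Notation rate := ((`|al| + 1) / 2).

Definition coef (z : C) k := numtau A B Q z k / (qpoch (Q * z ^+ 2) Q k * qpoch Q Q k).

Definition coef_ratio (z : C) k :=
  (A * (1 + z ^+ 2 * Q ^+ (2 * k)) - B * Q ^+ k * (1 + z ^+ 2)) /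
  ((1 - Q * z ^+ 2 * Q ^+ k) * (1 - Q * Q ^+ k)).

Lemma phitermE z x k : phiterm A B Q z x k = coef z k * x ^+ k.
Proof. by []. Qed.

Lemma coef0 z : coef z 0 = 1.
Proof. by rewrite /coef /numtau /qpoch !big_ord0 mulr1 divr1. Qed.

Lemma coefS z k : coef z k.+1 = coef z k * coef_ratio z k.
Proof. by rewrite /coef /coef_ratio /numtau /qpoch !big_ord_recr /= !invfM; ring. Qed.

Let q_ge0 : 0 <= q := ltW q_gt0.

Let normc_Qpow_le1 m : normc (Q ^+ m) <= 1.
Proof. by rewrite normcX normc_real (ger0_norm q_ge0) exprn_ile1 ?ltW. Qed.

Lemma normc_coef_ratio_num_le z k :
  normc (A * (1 + z ^+ 2 * Q ^+ (2 * k)) - B * Q ^+ k * (1 + z ^+ 2)) <=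
  `|al| + q ^+ k * (`|al| * normc z ^+ 2 + `|be| * (1 + normc z ^+ 2)).
Proof.
set n2 := normc z ^+ 2; have n2_ge0 : 0 <= n2 by rewrite exprn_ge0 ?normc_ge0.
have t_ge0 : 0 <= q ^+ k by rewrite exprn_ge0.
have t2k_le : q ^+ (2 * k) <= q ^+ k.
  by rewrite mulnC exprM expr2 ler_piMr // exprn_ile1 // ltW.
have h1 : normc (1 + z ^+ 2 * Q ^+ (2 * k)) <= 1 + n2 * q ^+ (2 * k).
  apply: le_trans (le_normcD _ _) _.
  by rewrite normc1 normcM !normcX normc_real (ger0_norm q_ge0).
have h2 : normc (1 + z ^+ 2) <= 1 + n2.
  by apply: le_trans (le_normcD _ _) _; rewrite normc1 normcX.
apply: le_trans (ler_normcB _ _) _.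
rewrite !normcM !normc_real normcX normc_real (ger0_norm q_ge0).
have e1 := ler_wpM2l (normr_ge0 al) h1.
have e2 := ler_wpM2l (mulr_ge0 (normr_ge0 be) t_ge0) h2.
have e3 := ler_wpM2l (mulr_ge0 (normr_ge0 al) n2_ge0) t2k_le.
nra.
Qed.

Lemma normc_coef_ratio_le z k : normc z ^+ 2 * q ^+ k.+1 < 1 ->
  normc (coef_ratio z k) <=
  (`|al| + q ^+ k * (`|al| * normc z ^+ 2 + `|be| * (1 + normc z ^+ 2))) /
  ((1 - normc z ^+ 2 * q ^+ k.+1) * (1 - q ^+ k.+1)).
Proof.
move=> small; set n2 := normc z ^+ 2.
have tS_lt1 : q ^+ k.+1 < 1 by rewrite exprn_ilt1.
have f1_ge : 1 - n2 * q ^+ k.+1 <= normc (1 - Q * z ^+ 2 * Q ^+ k).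
  apply: le_trans (lerB_normc _ _).
  rewrite normc1 !normcM !normcX normc_real (ger0_norm q_ge0).
  by rewrite exprS mulrCA mulrA.
have f2_ge : 1 - q ^+ k.+1 <= normc (1 - Q * Q ^+ k).
  apply: le_trans (lerB_normc _ _).
  by rewrite normc1 -exprS normcX normc_real (ger0_norm q_ge0).
rewrite /coef_ratio normcM normcV normcM.
apply: ler_pM; rewrite ?normc_ge0 ?invr_ge0 ?mulr_ge0 ?normc_ge0 ?normc_coef_ratio_num_le //.
rewrite lef_pV2 ?posrE ?mulr_gt0 ?(lt_le_trans _ f1_ge) ?(lt_le_trans _ f2_ge) ?subr_gt0 //.
by apply: ler_pM => //; rewrite subr_ge0 ltW.
Qed.

(* As [q^k -> 0], [coef_ratio z k] tends to [alpha]; any rate in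
   [(|alpha|, 1)] would do. *)
Lemma coef_ratio_eventually_le z :
  \forall k \near \oo, normc (coef_ratio z k) <= rate.
Proof.
set n2 := normc z ^+ 2; set c := `|al| * n2 + `|be| * (1 + n2).
have qpow0 : (fun k => q ^+ k) @ \oo --> 0 by apply: cvg_expr; rewrite ger0_norm.
have qpowS0 : (fun k => q ^+ k.+1) @ \oo --> 0.
  by rewrite -(mulr0 q); under eq_fun do rewrite exprS; apply: cvgMl_tmp.
have bound_cvg : (fun k => (`|al| + q ^+ k * c) / ((1 - n2 * q ^+ k.+1) * (1 - q ^+ k.+1)))
    @ \oo --> `|al|.
  rewrite -[X in _ --> X](_ : (`|al| + 0 * c) / ((1 - n2 * 0) * (1 - 0)) = _); last first.
    by rewrite !(mul0r, mulr0, subr0, addr0, mulr1, divr1).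
  apply: cvgM; first by apply: cvgD; [exact: cvg_cst | exact: cvgMr_tmp].
  apply: cvgV; first by rewrite !(mulr0, subr0, mulr1) oner_neq0.
  by apply: cvgM; apply: cvgB;
    [exact: cvg_cst | exact: cvgMl_tmp | exact: cvg_cst | exact: qpowS0].
have small : (fun k => n2 * q ^+ k.+1) @ \oo --> 0 by rewrite -(mulr0 n2); apply: cvgMl_tmp.
have al_lt_rate : `|al| < rate := (midf_lt al_lt1).1.
apply: filterS2 (cvgr_lt _ small _ ltr01) (cvgr_lt _ bound_cvg _ al_lt_rate).
move=> k small_k bound_k.
exact: le_trans (normc_coef_ratio_le small_k) (ltW bound_k).
Qed.

Lemma coef_geometric_bound z :
  exists M, forall k, normc (coef z k) <= M * rate ^+ k.
Proof.
apply: eventually_geometric_bound => [| k |]; first by rewrite divr_gt0 // ltr_wpDl.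
  exact: normc_ge0.
apply: filterS (coef_ratio_eventually_le z) => k ratio_le.
by rewrite coefS normcM mulrC ler_wpM2r ?normc_ge0.
Qed.

Let rate_ge0 : 0 <= rate.
Proof. by rewrite divr_ge0 // addr_ge0. Qed.

Let rate_lt1 : rate < 1.
Proof. exact: (midf_lt al_lt1).2. Qed.

Lemma phi_cvg z x : normc x <= 1 ->
  series (phiterm A B Q z x) @ \oo --> phitau A B Q z x.
Proof.
move=> x_le1; have [M HM] := coef_geometric_bound z.
apply: (@cvg_series_geometric_bound _ _ M rate) => [|k].
  by rewrite rate_ge0 rate_lt1.
rewrite phitermE normcM normcX -[X in _ <= X]mulr1.
by apply: ler_pM; rewrite ?normc_ge0 ?exprn_ge0 ?exprn_ile1 ?normc_ge0.
Qed.

Lemma normc_phi_sub1_le z : exists K, forall x, normc x <= 1 ->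
  normc (phitau A B Q z x - 1) <= K * normc x.
Proof.
have [M HM] := coef_geometric_bound z; set r := rate in HM.
have M_ge0 : 0 <= M by rewrite -[M]mulr1 -(expr0 r) (le_trans _ (HM 0%N)) ?normc_ge0.
exists (M / (1 - r)) => x x_le1.
apply: (cvg_normc_le (phi_cvg (z := z) x_le1)); exists 1%N => // -[//|n] _.
rewrite seriesEord /= big_ord_recl /= phitermE coef0 mulr1 addrAC subrr add0r.
apply: le_trans (normc_sum _ _) _.
apply: le_trans (_ : \sum_(i < n) normc x * geometric M r i <= _).
  apply: ler_sum => i _; rewrite phitermE normcM normcX /= /bump /= add1n exprS mulrCA.
  rewrite ler_wpM2l ?normc_ge0 // -[X in _ <= X]mulr1.
  apply: ler_pM; rewrite ?normc_ge0 ?exprn_ge0 ?exprn_ile1 ?normc_ge0 //.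
  apply: le_trans (HM _) _; rewrite exprS mulrCA ler_piMl ?mulr_ge0 ?exprn_ge0 //.
  exact: ltW.
rewrite -mulr_sumr mulrC ler_wpM2r ?normc_ge0 //.
rewrite (_ : \sum_(i < n) _ = series (geometric M r) n); last by rewrite seriesEord.
rewrite geometric_seriesE ?lt_eqF //=.
by rewrite ler_wpM2r ?invr_ge0 ?subr_ge0 ?(ltW rate_lt1) // ler_piMr // gerBl exprn_ge0.
Qed.

Lemma phi_qpow_cvg1 z : phitau A B Q z (Q ^+ m) @[m --> \oo] --> (1 : C).
Proof.
have [K HK] := normc_phi_sub1_le z.
have lin0 : (fun m => `|K| * q ^+ m) @ \oo --> 0.
  by rewrite -(mulr0 `|K|); apply: cvgMl_tmp; apply: cvg_expr; rewrite ger0_norm.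
apply/cvg_normcP => e e_gt0; apply: filterS (cvgr_lt _ lin0 _ e_gt0) => m lin_m.
rewrite -normcN opprB; apply: le_lt_trans (HK _ (normc_Qpow_le1 m)) _.
rewrite normcX normc_real (ger0_norm q_ge0); apply: le_lt_trans lin_m.
by rewrite ler_wpM2r ?exprn_ge0 ?ler_norm.
Qed.

(* The lower parameter [q z^2] of the series avoids the poles [q^-k]. *)
Definition pole_free (z : C) := forall k, 1 - Q * z ^+ 2 * Q ^+ k != 0.

Let one_sub_QpowS_neq0 k : 1 - Q ^+ k.+1 != 0.
Proof. by rewrite -rmorphXn one_subC_neq0 // exprn_ilt1. Qed.

(* The q-difference equation of [phi_feq], coefficient by coefficient. *)
Lemma coef_shift z x k : z != 0 -> pole_free z ->
  coef z k.+1 * (z * (Q ^+ 2 * x) ^+ k.+1 + z^-1 * x ^+ k.+1 - (z + z^-1) * (Q * x) ^+ k.+1) =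
  x * coef z k * (A * (z * (Q ^+ 2 * x) ^+ k + z^-1 * x ^+ k) - B * (z + z^-1) * (Q * x) ^+ k).
Proof.
move=> z_neq0 /(_ k) f1_neq0; have := one_sub_QpowS_neq0 k; rewrite exprS => f2_neq0.
rewrite coefS /coef_ratio !exprMn !exprS exprM exprAC.
by field; rewrite z_neq0 f1_neq0 f2_neq0.
Qed.

Lemma phi_feq z x : z != 0 -> pole_free z -> normc x <= 1 ->
  (1 - A * x) * (z * phitau A B Q z (Q ^+ 2 * x) + z^-1 * phitau A B Q z x) =
  (1 - B * x) * (z + z^-1) * phitau A B Q z (Q * x).
Proof.
move=> z_neq0 z_pf x_le1.
have Qpow_x_le1 k : normc (Q ^+ k * x) <= 1.
  rewrite normcM normcX normc_real (ger0_norm q_ge0).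
  by rewrite mulr_ile1 ?exprn_ge0 ?normc_ge0 // exprn_ile1 // ltW.
have Qx_le1 : normc (Q * x) <= 1 by rewrite -[Q]expr1 Qpow_x_le1.
set t := phiterm A B Q z.
set P0 := phitau A B Q z x; set P1 := phitau A B Q z (Q * x).
set P2 := phitau A B Q z (Q ^+ 2 * x).
have lincomb_cvg a b c : series (fun k => a * t (Q ^+ 2 * x) k + b * t x k + c * t (Q * x) k)
    @ \oo --> a * P2 + b * P0 + c * P1.
  exact: cvg_series_lincomb3 (phi_cvg (z := z) (Qpow_x_le1 2%N)) (phi_cvg (z := z) x_le1)
    (phi_cvg (z := z) Qx_le1).
pose u k := z * t (Q ^+ 2 * x) k + z^-1 * t x k + - (z + z^-1) * t (Q * x) k.
have u0 : u 0%N = 0 by rewrite /u /t !phitermE coef0 !expr0; ring.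
have uS_cvg : series (fun k => u k.+1) @ \oo -->
    x * A * z * P2 + x * A * z^-1 * P0 + - (x * B * (z + z^-1)) * P1.
  rewrite (_ : (fun k => u k.+1) = fun k => x * A * z * t (Q ^+ 2 * x) k +
      x * A * z^-1 * t x k + - (x * B * (z + z^-1)) * t (Q * x) k).
    exact: lincomb_cvg.
  apply: funext => k; rewrite /u /t !phitermE.
  transitivity (coef z k.+1 * (z * (Q ^+ 2 * x) ^+ k.+1 + z^-1 * x ^+ k.+1 -
                               (z + z^-1) * (Q * x) ^+ k.+1)); first by ring.
  by rewrite coef_shift //; ring.
have E := cvg_unique (@norm_hausdorff _ C) (cvg_series_shift u0 (lincomb_cvg _ _ _)) uS_cvg.
apply/eqP; rewrite -subr_eq0; apply/eqP.
transitivity (z * P2 + z^-1 * P0 + - (z + z^-1) * P1 -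
  (x * A * z * P2 + x * A * z^-1 * P0 + - (x * B * (z + z^-1)) * P1)); first by ring.
by clearbody P0 P1 P2; rewrite E subrr.
Qed.

Let one_sub_AQpow_neq0 m : 1 - A * Q ^+ m != 0.
Proof.
rewrite -rmorphXn -rmorphM one_subC_neq0 //; apply: le_lt_trans al_lt1.
apply: le_trans (ler_wpM2r (exprn_ge0 _ q_ge0) (ler_norm al)) _.
by rewrite ler_piMr // exprn_ile1 // ltW.
Qed.

Let one_sub_BQpow_neq0 m : 1 - B * Q ^+ m != 0.
Proof.
rewrite -rmorphXn -rmorphM one_subC_neq0 //; have [be_le0|be_gt0] := lerP be 0.
  by apply: le_lt_trans ltr01; rewrite mulr_le0_ge0 ?exprn_ge0.
by apply: le_lt_trans be_lt1; rewrite ler_piMr ?(ltW be_gt0) // exprn_ile1 // ltW.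
Qed.

Let gamt_neq0 (m : nat) : gamt A B Q m != 0.
Proof. by rewrite /gamt -exprnP mulf_neq0 ?invr_eq0. Qed.

(* The solution of the recurrence of [jost_solves] asymptotic to [w^m]. *)
Definition jost (w : C) m := w ^+ m * phitau A B Q w (Q ^+ m).

Lemma jost_solves w : w != 0 -> pole_free w ->
  solves (fun m => gamt A B Q m) (w + w^-1) (jost w).
Proof.
move=> w_neq0 w_pf m; have := phi_feq w_neq0 w_pf (normc_Qpow_le1 m).
rewrite -exprD add2n -exprS /jost /gamt -exprnP.
move: (phitau A B Q w (Q ^+ m)) (phitau A B Q w (Q ^+ m.+1)) (phitau A B Q w (Q ^+ m.+2)).
move=> P0 P1 P2 feq; apply: (mulfI (one_sub_BQpow_neq0 m)).
transitivity (w ^+ m.+1 * ((1 - A * Q ^+ m) * (w * P2 + w^-1 * P0))).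
  by rewrite !exprS; field; rewrite w_neq0 one_sub_BQpow_neq0.
by rewrite feq !exprS; field.
Qed.

Lemma casoratian_jost z : z != 0 -> pole_free z -> pole_free z^-1 ->
  casoratian (jost z) (jost z^-1) 0 = z^-1 - z.
Proof.
move=> z_neq0 z_pf zV_pf.
have zV_sol := jost_solves (invr_neq0 z_neq0) zV_pf; rewrite invrK addrC in zV_sol.
have W_const := casoratian_const gamt_neq0 (jost_solves z_neq0 z_pf) zV_sol.
set P := fun w m => phitau A B Q w (Q ^+ m).
have WE m : casoratian (jost z) (jost z^-1) m =
    z^-1 * P z m * P z^-1 m.+1 - z * P z m.+1 * P z^-1 m.
  rewrite /casoratian /jost /P !exprVn ![z ^+ m.+1]exprS.
  move: (phitau A B Q z (Q ^+ m)) (phitau A B Q z (Q ^+ m.+1)).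
  move: (phitau A B Q z^-1 (Q ^+ m)) (phitau A B Q z^-1 (Q ^+ m.+1)) => a b c d.
  by field; rewrite z_neq0 expf_neq0.
have P1 w : P w m @[m --> \oo] --> (1 : C) := phi_qpow_cvg1 w.
have P1S w : P w m.+1 @[m --> \oo] --> (1 : C) by rewrite (cvg_shiftS (P w)).
have W_cvg : casoratian (jost z) (jost z^-1) m @[m --> \oo] --> z^-1 * 1 * 1 - z * 1 * 1.
  by rewrite (funext WE); apply: cvgB; apply: cvgM; rewrite ?P1 ?P1S //; apply: cvgMl_tmp.
rewrite !mulr1 (funext W_const) in W_cvg.
by apply: (cvg_unique (@norm_hausdorff _ C) _ W_cvg); apply: cvg_cst.
Qed.

Lemma pAB_eq_rhs25 z n : z != 0 -> pole_free z -> pole_free z^-1 -> z^-1 != z -> -1 <= n ->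
  pAB A B Q n (z + z^-1) = rhs25 A B Q n z.
Proof.
move=> z_neq0 z_pf zV_pf zV_neq; case: n => [k|[|//]] _; last first.
  rewrite /rhs25 (_ : Negz 0 + 1 = 0) // oppr0 !expr0z !mul1r.
  by rewrite [phitau _ _ _ z 1 * _]mulrC subrr mulr0.
have zV_sol := jost_solves (invr_neq0 z_neq0) zV_pf; rewrite invrK addrC in zV_sol.
have W := casoratian_jost z_neq0 z_pf zV_pf.
have y_sol := normalized_solution_solves (jost_solves z_neq0 z_pf) zV_sol.
rewrite /pAB (pP_solution y_sol (normalized_solution0 _ _)); last first.
  by apply: normalized_solution1; rewrite W subr_eq0.
rewrite /rhs25 /normalized_solution W /jost -exprz_inv (_ : k%:Z + 1 = k.+1%:Z); last first.
  by rewrite -addn1 PoszD.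
rewrite -!exprnP /= !expr0 !mul1r.
move: (phitau A B Q z 1) (phitau A B Q z (Q ^+ k.+1)).
move: (phitau A B Q z^-1 1) (phitau A B Q z^-1 (Q ^+ k.+1)) => a b c d.
by ring.
Qed.

End QHypergeometric.

Section QLattice.
Variables (R : realType) (q : R).
Hypotheses (q_gt0 : 0 < q) (q_lt1 : q < 1).
Local Notation Q := (q%:C : R[i]).

Lemma one_sub_le_exprz_sub1 (j : int) : j != 0 -> 1 - q <= `|q ^ j - 1|.
Proof.
have qk_le1 k : q ^+ k <= 1 by rewrite exprn_ile1 // ltW.
case: j => [[//|k] _|k _].
  rewrite -exprnP ler0_norm ?subr_le0 // opprB lerD2l lerN2 exprS.
  by rewrite ler_piMr // ltW.
rewrite NegzE -invr_expz -exprnP ger0_norm; last first.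
  by rewrite subr_ge0 invf_ge1 ?exprn_gt0.
apply: le_trans (_ : q^-1 - 1 <= _); last first.
  by rewrite lerD2r lef_pV2 ?posrE ?exprn_gt0 // exprS ler_piMr // ltW.
have qVq : q^-1 * q = 1 by rewrite mulVf // gt_eqF.
have := sqr_ge0 (1 - q); have := invr_gt0 q; rewrite q_gt0; nra.
Qed.

Lemma exprz_gap (m m0 : int) : q ^ m != q ^ m0 -> q ^ m0 * (1 - q) <= `|q ^ m - q ^ m0|.
Proof.
move=> qm_neq; have q_neq0 : q != 0 by rewrite gt_eqF.
have qm : q ^ m - q ^ m0 = q ^ m0 * (q ^ (m - m0) - 1).
  by rewrite mulrBr mulr1 -expfzDr // [m0 + _]addrC subrK.
rewrite qm normrM gtr0_norm ?exprz_gt0 // ler_pM2l ?exprz_gt0 // one_sub_le_exprz_sub1 //.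
by apply: contraNneq qm_neq => /eqP; rewrite subr_eq0 => /eqP ->.
Qed.

Lemma off_lattice_pole_free (z : R[i]) : z != 0 -> ~ qhalf_lattice Q z ->
  [/\ pole_free q z, pole_free q z^-1 & z^-1 != z].
Proof.
move=> z_neq0 off; have Q_neq0 : Q != 0 by rewrite eq_complex /= eqxx andbT gt_eqF.
split.
- move=> k; apply: contra_notN off => /eqP pole; exists (Negz k).
  rewrite NegzE -invr_expz -exprnP; apply: (mulIf (expf_neq0 k.+1 Q_neq0)).
  rewrite mulVf ?expf_neq0 //; transitivity (1 - (1 - Q * z ^+ 2 * Q ^+ k)).
    by rewrite [Q ^+ k.+1]exprS; ring.
  by rewrite pole subr0.
- move=> k; apply: contra_notN off => /eqP pole; exists k.+1%:Z.
  rewrite -exprnP; apply/eqP; rewrite -subr_eq0; apply/eqP.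
  transitivity (z ^+ 2 * (1 - Q * z^-1 ^+ 2 * Q ^+ k)); last by rewrite pole mulr0.
  by rewrite [Q ^+ k.+1]exprS exprVn; field.
apply: contra_notN off => /eqP zV; exists 0; rewrite expr0z expr2 -{1}zV mulVf //.
Qed.

Lemma near_off_lattice (z : R[i]) : z != 0 -> qhalf_lattice Q z ->
  \forall w \near z^', w != 0 /\ ~ qhalf_lattice Q w.
Proof.
move=> z_neq0 [m0]; rewrite -fmorphXz => z2E.
have nz_gt0 : 0 < normc z by rewrite lt_def normc_eq0 z_neq0 normc_ge0.
have gap_gt0 : 0 < q ^ m0 * (1 - q) by rewrite mulr_gt0 ?exprz_gt0 // subr_gt0.
have id_cvg : (fun w => w) @ z^' --> z := @nbhs_dnbhs _ z.
have sq_cvg : (fun w => w * w) @ z^' --> z * z by apply: cvgM.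
near=> w.
have w_neq_z : w != z by near: w; exact: nbhs_dnbhs_neq.
have close : normc (z - w) < normc z by near: w; move/cvg_normcP: id_cvg; apply.
have sq_close : normc (z * z - w * w) < q ^ m0 * (1 - q).
  by near: w; move/cvg_normcP: sq_cvg; apply.
have w_neq0 : w != 0 by apply: contraTneq close => ->; rewrite subr0 ltxx.
split=> // -[m]; rewrite -fmorphXz => w2E.
have qm_eq : q ^ m = q ^ m0.
  apply/eqP; apply: contraTT sq_close => /exprz_gap; rewrite -leNgt distrC.
  by rewrite -!expr2 z2E w2E -rmorphB normc_real.
have : (w - z) * (w + z) == 0 by rewrite -subr_sqr w2E z2E qm_eq subrr.
rewrite mulf_eq0 subr_eq0 (negPf w_neq_z) /= addr_eq0 => /eqP w_eq.
by move: close; rewrite w_eq opprK -mulr2n normcMn mulr2n gtrDl ltNge (ltW nz_gt0).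
Unshelve. all: by end_near.
Qed.

End QLattice.

Section PolynomialContinuity.
Variables (R : realType) (al be q : R[i]).

Lemma pP_cvg (T : Type) (F : set_system T) (FF : Filter F) (g : T -> R[i]) (x : R[i]) :
  g @ F --> x -> forall k,
  (pP al be q (g t) k).1 @[t --> F] --> (pP al be q x k).1 /\
  (pP al be q (g t) k).2 @[t --> F] --> (pP al be q x k).2.
Proof.
move=> g_cvg; elim=> [|k [IH1 IH2]]; first by split; apply: cvg_cst.
split; first exact: IH2.
have e1 := cvgM (FF := FF) g_cvg IH2.
have e2 := cvgMl_tmp (FF := FF) (a := gamt al be q (k%:Z - 1) * gamt al be q k) IH1.
exact: (cvgB (FF := FF) e1 e2).
Qed.

Lemma pAB_joukowski_cvg n (z : R[i]) : z != 0 ->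
  pAB al be q n (w + w^-1) @[w --> z^'] --> pAB al be q n (z + z^-1).
Proof.
move=> z_neq0; have FF := dnbhs_filter z.
have id_cvg : (fun w => w) @ z^' --> z := @nbhs_dnbhs _ z.
have jz_cvg := cvgD (FF := FF) id_cvg (cvgV (FF := FF) z_neq0 id_cvg).
case: n => k; last exact: cvg_cst.
exact: (pP_cvg FF jz_cvg k).2.
Qed.

End PolynomialContinuity.

Unset Implicit Arguments.

Theorem proposition2p5 (R : realType) (q al be : R) (z : R[i]) (n : int) :
  0 < q < 1 -> -1 < al < 1 -> be < 1 -> z != 0 -> -1 <= n ->
  (~ qhalf_lattice q%:C z ->
     pAB al%:C be%:C q%:C n (z + z^-1) = rhs25 al%:C be%:C q%:C n z) /\
  (qhalf_lattice q%:C z ->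
     rhs25 al%:C be%:C q%:C n w @[w --> z^'] --> pAB al%:C be%:C q%:C n (z + z^-1)).
Proof.
move=> /andP[q_gt0 q_lt1] /andP[al_gtN1 al_lt1] be_lt1 z_neq0 n_ge.
have al_norm_lt1 : `|al| < 1 by rewrite ltr_norml al_gtN1.
have off_lattice_eq w : w != 0 -> ~ qhalf_lattice q%:C w ->
    pAB al%:C be%:C q%:C n (w + w^-1) = rhs25 al%:C be%:C q%:C n w.
  move=> w_neq0 /(off_lattice_pole_free q_gt0 w_neq0) [w_pf wV_pf wV_neq].
  exact: pAB_eq_rhs25.
split=> [|z_lat]; first exact: off_lattice_eq.
apply: (cvg_trans _ (pAB_joukowski_cvg z_neq0)); apply: near_eq_cvg.
apply: filterS (near_off_lattice q_gt0 q_lt1 z_neq0 z_lat) => w [w_neq0 w_off].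
by rewrite off_lattice_eq.
Qed.
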